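(* Let $\theta\in[0,1]$ and $\psi=\frac12-\frac{\theta}{4}$. On the cycle graph $C_5$, for $i\in\{1,2\}$ let $P^i_n$ be the probability that the tipsy cop and drunken robber game, started with cop and robber at distance $i$ and the robber moving first, lasts at least $n$ rounds (no capture during the first $2n$ moves). Then for all $n\ge 1$, \[ P_n^1=\psi P^1_{n-1}+\frac{\theta}{4}P^2_{n-1},\qquad P_n^2=\psi P^1_{n-1}+\frac{\theta}{2}P^2_{n-1}. \]
   Context: Tipsy cop and drunken robber game on a graph: a cop and a robber occupy distinct vertices and alternate moves, the robber moving first; on each move the mover must move to an adjacent vertex (no staying put). The robber always moves to a uniformly random neighbor. The cop, independently at each of her moves, with probability $\theta$ moves to a uniformly random neighbor and with probability $1-\theta$ moves to a neighbor that decreases her distance to the robber (onto the robber if adjacent). All random choices are independent; the robber is captured (game over) as soon as both occupy the same vertex. A round consists of one robber move followed by one cop move. $P^1_0=P^2_0=1$. *)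

From HB Require Import structures.
From mathcomp Require Import all_boot all_order all_algebra.
Set Implicit Arguments. Unset Strict Implicit. Unset Printing Implicit Defensive.
Import Order.TTheory GRing.Theory Num.Theory.
Local Open Scope ring_scope.

Section Game.
Variables (R : realFieldType) (T : finType) (adj : rel T) (dist : T -> T -> nat).

Definition rw_prob (x y : T) : R :=
  if adj x y then (#|[pred z | adj x z]|%:R)^-1 else 0.

Definition cop_prob (theta : R) (c r c' : T) : R :=
  theta * rw_prob c c' +
  (1 - theta) *
    (if adj c c' && (dist c' r < dist c r)%N
     then (#|[pred z | adj c z && (dist z r < dist c r)%N]|%:R)^-1 else 0).

Fixpoint survive (theta : R) (n : nat) (c r : T) : R :=
  match n with
  | 0 => 1
  | n'.+1 =>
      \sum_(r' : T) rw_prob r r' *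
        (if r' == c then 0 else
           \sum_(c' : T) cop_prob theta c r' c' *
             (if c' == r' then 0 else survive theta n' c' r'))
  end.
End Game.

Definition adjC5 : rel 'I_5 :=
  fun i j => (val j == (val i).+1 %% 5)%N || (val i == (val j).+1 %% 5)%N.

Definition distC5 (i j : 'I_5) : nat :=
  minn ((val i + 5 - val j) %% 5) ((val j + 5 - val i) %% 5).

From HB Require Import structures.
From mathcomp Require Import all_boot all_order all_algebra.
From mathcomp Require Import ring.
Set Implicit Arguments. Unset Strict Implicit. Unset Printing Implicit Defensive.
Import Order.TTheory GRing.Theory Num.Theory.
Local Open Scope ring_scope.

(* On C_5 a position without capture is determined, up to symmetry, by the
   distance d in {1, 2} between cop and robber, so by induction the survival
   probability only depends on d.  In one round the robber moves to each
   neighbour with probability 1/2, then the cop moves to each neighbour with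
   probability theta/2 and along the unique shortest path with probability
   1 - theta.  Each capture-free pair of moves thus weighs theta/4, plus
   (1 - theta)/2 if the cop's move is greedy.  From either distance d, exactly
   one such pair ends at distance 1 with a random cop move, one with a greedy
   cop move, and d pairs end at distance 2, all with a random cop move; hence
   P^d_(n+1) = psi P^1_n + (theta/4) d P^2_n. *)

Section OneRound.
Variables (R : realFieldType) (T : finType) (adj : rel T) (dist : T -> T -> nat).
Variable theta : R.
Local Notation survive := (survive adj dist theta).

Definition round_prob (c r r' c' : T) : R :=
  rw_prob R adj r r' * cop_prob adj dist theta c r' c' *
  ((r' != c) && (c' != r'))%:R.

Lemma survive_succ n c r :
  survive n.+1 c r =
  \sum_(r' : T) \sum_(c' : T) round_prob c r r' c' * survive n c' r'.
Proof.
rewrite /=; apply: eq_bigr => r' _; rewrite /round_prob.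
have [->|_] := eqVneq r' c.
  by rewrite mulr0 big1 // => c' _; rewrite !mulr0 mul0r.
rewrite mulr_sumr; apply: eq_bigr => c' _.
by case: eqP => _ /=; rewrite ?(mulr0, mulr1, mul0r, mulrA).
Qed.

Lemma survive_succ_dist n (g : nat -> R) c r :
  (forall c' r', c' != r' -> survive n c' r' = g (dist c' r')) ->
  survive n.+1 c r =
  \sum_(r' : T) \sum_(c' : T) round_prob c r r' c' * g (dist c' r').
Proof.
move=> survive_g; rewrite survive_succ; apply: eq_bigr => r' _.
apply: eq_bigr => c' _; have [eq_c'r'|/survive_g ->] := eqVneq c' r'; last by [].
by rewrite /round_prob eq_c'r' eqxx andbF !mulr0 !mul0r.
Qed.

End OneRound.

Lemma sum_ord5 (F : 'I_5 -> nat) :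
  (\sum_(i < 5) F i = F (@Ordinal 5 0 isT) + F (@Ordinal 5 1 isT)
    + F (@Ordinal 5 2 isT) + F (@Ordinal 5 3 isT) + F (@Ordinal 5 4 isT))%N.
Proof.
rewrite !big_ord_recr big_ord0 /= add0n.
by congr (_ + _ + _ + _ + _)%N; congr F; apply: val_inj.
Qed.

Ltac case_I5 x := case: x => [[|[|[|[|[|?]]]]] ?] //.

Ltac compute_I5 := rewrite -?sum1_card ?big_mkcond /= !sum_ord5; by vm_compute.

Lemma distC5_eq0 (c r : 'I_5) : (distC5 c r == 0%N) = (c == r).
Proof. by case_I5 c; case_I5 r. Qed.

Lemma distC5_le2 (c r : 'I_5) : (distC5 c r <= 2)%N.
Proof. by case_I5 c; case_I5 r. Qed.

Lemma card_adjC5 (x : 'I_5) : #|[pred z | adjC5 x z]| = 2%N.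
Proof. case_I5 x; compute_I5. Qed.

Lemma card_closerC5 (x r : 'I_5) : x != r ->
  #|[pred z | adjC5 x z && (distC5 z r < distC5 x r)%N]| = 1%N.
Proof. case_I5 x; case_I5 r; compute_I5. Qed.

Definition legal_round (c r r' c' : 'I_5) : bool :=
  [&& adjC5 r r', r' != c, adjC5 c c' & c' != r'].

Definition greedy_round (c r r' c' : 'I_5) : bool :=
  legal_round c r r' c' && (distC5 c' r' < distC5 c r')%N.

Lemma round_probC5 (R : realFieldType) (theta : R) (c r r' c' : 'I_5) :
  round_prob adjC5 distC5 theta c r r' c' =
  theta / 4 * (legal_round c r r' c')%:R +
  (1 - theta) / 2 * (greedy_round c r r' c')%:R.
Proof.
rewrite /round_prob /cop_prob /rw_prob /greedy_round /legal_round !card_adjC5.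
have [->|ne] := eqVneq r' c; first by rewrite /= !andbF /= !mulr0 addr0.
rewrite card_closerC5; last by rewrite eq_sym.
case: (adjC5 r r') (adjC5 c c') (c' != r') (_ < _)%N => [] [] [] [] /=;
  by field; rewrite ?pnatr_eq0.
Qed.

Definition count_at_dist (P : 'I_5 -> 'I_5 -> bool) (k : nat) : nat :=
  \sum_(r' < 5) \sum_(c' < 5) (P r' c' && (distC5 c' r' == k)).

Lemma count_roundsC5 (c r : 'I_5) : c != r ->
  [/\ count_at_dist (legal_round c r) 1 = 1%N,
      count_at_dist (legal_round c r) 2 = distC5 c r,
      count_at_dist (greedy_round c r) 1 = 1%N &
      count_at_dist (greedy_round c r) 2 = 0%N].
Proof. rewrite /count_at_dist !sum_ord5; case_I5 c; case_I5 r; by vm_compute. Qed.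

Lemma sum_by_distC5 (R : realFieldType) (P : 'I_5 -> 'I_5 -> bool) (g : nat -> R) :
  (forall r' c', P r' c' -> c' != r') ->
  \sum_(r' < 5) \sum_(c' < 5) (P r' c')%:R * g (distC5 c' r') =
  (count_at_dist P 1)%:R * g 1%N + (count_at_dist P 2)%:R * g 2%N.
Proof.
move=> P_neq; rewrite /count_at_dist !natr_sum !mulr_suml -big_split /=.
apply: eq_bigr => r' _; rewrite !natr_sum !mulr_suml -big_split /=.
apply: eq_bigr => c' _; have [/P_neq|] := boolP (P r' c'); last by rewrite /= !mul0r addr0.
rewrite -distC5_eq0 => dist_pos.
have := distC5_le2 c' r'.
by case: (distC5 c' r') dist_pos => [|[|[|?]]] //= _ _; rewrite ?mul0r ?mul1r ?addr0 ?add0r.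
Qed.

Section SurvivalOnC5.
Variables (R : realFieldType) (theta : R).

Fixpoint survival_by_dist (n d : nat) : R :=
  if n is n'.+1 then
    (2^-1 - theta / 4) * survival_by_dist n' 1 + theta / 4 * d%:R * survival_by_dist n' 2
  else 1.

Lemma survive_C5_dist n (c r : 'I_5) : c != r ->
  survive adjC5 distC5 theta n c r = survival_by_dist n (distC5 c r).
Proof.
elim: n c r => [//|n IHn] c r neq_cr.
rewrite (survive_succ_dist (g := survival_by_dist n)) //.
have legal_neq r' c' : legal_round c r r' c' -> c' != r' by case/and4P.
have greedy_neq r' c' : greedy_round c r r' c' -> c' != r' by case/andP=> /legal_neq.
transitivity (theta / 4 *
    \sum_(r' < 5) \sum_(c' < 5) (legal_round c r r' c')%:R * survival_by_dist n (distC5 c' r')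
  + (1 - theta) / 2 *
    \sum_(r' < 5) \sum_(c' < 5) (greedy_round c r r' c')%:R * survival_by_dist n (distC5 c' r')).
  rewrite !mulr_sumr -big_split; apply: eq_bigr => r' _.
  rewrite !mulr_sumr -big_split; apply: eq_bigr => c' _.
  by rewrite round_probC5 mulrDl -!mulrA.
rewrite !sum_by_distC5 //.
have [-> -> -> ->] := count_roundsC5 neq_cr.
by rewrite /=; field; rewrite ?pnatr_eq0.
Qed.

End SurvivalOnC5.

Theorem mainTheorem8 (R : realFieldType) (theta : R) :
  0 <= theta <= 1 ->
  let psi := 2^-1 - theta / 4 in
  let P := survive adjC5 distC5 theta in
  forall n : nat, (1 <= n)%N ->
  forall c1 r1 c2 r2 : 'I_5, distC5 c1 r1 = 1%N -> distC5 c2 r2 = 2%N ->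
    (forall c r : 'I_5, distC5 c r = 1%N ->
       P n c r = psi * P n.-1 c1 r1 + theta / 4 * P n.-1 c2 r2) /\
    (forall c r : 'I_5, distC5 c r = 2%N ->
       P n c r = psi * P n.-1 c1 r1 + theta / 2 * P n.-1 c2 r2).
Proof.
move=> _ psi P [//|n] _ c1 r1 c2 r2 dist_c1r1 dist_c2r2.
have P_dist m c r d : distC5 c r = d.+1 -> P m c r = survival_by_dist theta m d.+1.
  move=> dist_cr; rewrite /P survive_C5_dist ?dist_cr //.
  by rewrite -distC5_eq0 dist_cr.
rewrite [n.+1.-1]/= (P_dist _ _ _ _ dist_c1r1) (P_dist _ _ _ _ dist_c2r2).
split=> c r /P_dist -> /=; rewrite /psi; field; by rewrite ?pnatr_eq0.
Qed.
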